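(* If $G$ is a countably infinite HE-homogeneous graph satisfying property $(\ast)$, then $G$ is MB-homogeneous.
   Context: All graphs are undirected and loopless; subgraphs are induced. A homomorphism maps adjacent vertices to adjacent vertices; a monomorphism is an injective homomorphism; a bimorphism is a bijective endomorphism. $G$ is HE-homogeneous if every homomorphism between finite induced subgraphs of $G$ is the restriction of a surjective endomorphism of $G$; $G$ is MB-homogeneous if every monomorphism between finite induced subgraphs of $G$ is the restriction of a bimorphism of $G$. $G$ has property $(\ast)$ if for every surjective monomorphism $f:A\to B$ between finite induced subgraphs of $G$ and every vertex $c\notin A$ there exists a vertex $d\notin B$ such that $f\cup\{(c,d)\}$ is a homomorphism. *)

(* Finite induced subgraphs are given by
   finite vertex predicates; maps between them are total functions V -> V of
   which only the values on the domain matter. *)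
From Stdlib Require Import List Classical ClassicalEpsilon.

Definition simple_graph {V : Type} (E : V -> V -> Prop) : Prop :=
  (forall x y, E x y -> E y x) /\ (forall x, ~ E x x).

Definition countably_infinite (V : Type) : Prop :=
  exists h : V -> nat, (forall x y, h x = h y -> x = y) /\ (forall n, exists x, h x = n).

Definition finite_set {V : Type} (A : V -> Prop) : Prop :=
  exists l : list V, forall x, A x <-> In x l.

Definition is_hom {V : Type} (E : V -> V -> Prop) (A B : V -> Prop) (f : V -> V) : Prop :=
  (forall x, A x -> B (f x)) /\
  (forall x y, A x -> A y -> E x y -> E (f x) (f y)).

Definition is_mono {V : Type} (E : V -> V -> Prop) (A B : V -> Prop) (f : V -> V) : Prop :=
  is_hom E A B f /\ (forall x y, A x -> A y -> f x = f y -> x = y).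

Definition full {V : Type} : V -> Prop := fun _ => True.

Definition surj {V : Type} (g : V -> V) : Prop := forall y, exists x, g x = y.
Definition inj {V : Type} (g : V -> V) : Prop := forall x y, g x = g y -> x = y.

Definition restricts_to {V : Type} (g f : V -> V) (A : V -> Prop) : Prop :=
  forall x, A x -> g x = f x.

Definition HE_homogeneous {V : Type} (E : V -> V -> Prop) : Prop :=
  forall (A B : V -> Prop) (f : V -> V),
    finite_set A -> finite_set B -> is_hom E A B f ->
    exists g : V -> V, is_hom E full full g /\ surj g /\ restricts_to g f A.

Definition MB_homogeneous {V : Type} (E : V -> V -> Prop) : Prop :=
  forall (A B : V -> Prop) (f : V -> V),
    finite_set A -> finite_set B -> is_mono E A B f ->
    exists g : V -> V, is_hom E full full g /\ inj g /\ surj g /\ restricts_to g f A.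

Definition extend_map {V : Type} (f : V -> V) (c d : V) : V -> V :=
  fun x => if excluded_middle_informative (x = c) then d else f x.

Definition add_vertex {V : Type} (A : V -> Prop) (c : V) : V -> Prop :=
  fun x => A x \/ x = c.

Definition property_star {V : Type} (E : V -> V -> Prop) : Prop :=
  forall (A B : V -> Prop) (f : V -> V),
    finite_set A -> finite_set B -> is_mono E A B f ->
    (forall y, B y -> exists x, A x /\ f x = y) ->
    forall c, ~ A c ->
    exists d, ~ B d /\ is_hom E (add_vertex A c) (add_vertex B d) (extend_map f c d).

(* A back-and-forth argument.  Enumerate V as v_0, v_1, ... and grow the
   given finite monomorphism f through finite monomorphisms f_0 = f,
   f_1, ... : at stage n, property (∗) puts v_n into the domain (forth) and
   HE-homogeneity puts v_n into the range (back).  For the back step,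
   extend f_n to a surjective endomorphism g, pick a preimage x of v_n under
   g and add (x, v_n); as v_n is not yet a value of f_n, x is new and the
   extension stays injective.  The union of the chain is a bijective
   endomorphism extending f. *)
From Stdlib Require Import List Classical ClassicalEpsilon Lia PeanoNat.

Section BackAndForth.

Variables (V : Type) (E : V -> V -> Prop).

Definition local_mono (l : list V) (f : V -> V) : Prop :=
  (forall x y, In x l -> In y l -> f x = f y -> x = y) /\
  (forall x y, In x l -> In y l -> E x y -> E (f x) (f y)).

Record stage := Stage {
  stage_dom : list V;
  stage_map : V -> V;
  stage_mono : local_mono stage_dom stage_map }.

Definition extends (s s' : stage) : Prop :=
  forall x, In x (stage_dom s) ->
    In x (stage_dom s') /\ stage_map s' x = stage_map s x.

Definition covers (s : stage) (v : V) : Prop :=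
  In v (stage_dom s) /\ exists x, In x (stage_dom s) /\ stage_map s x = v.

Lemma extends_refl (s : stage) : extends s s.
Proof. intros x Hx; auto. Qed.

Lemma extends_trans (s1 s2 s3 : stage) :
  extends s1 s2 -> extends s2 s3 -> extends s1 s3.
Proof.
  intros H12 H23 x Hx.
  destruct (H12 x Hx) as [Hx2 E2]; destruct (H23 x Hx2) as [Hx3 E3].
  split; [exact Hx3 | congruence].
Qed.

Lemma extend_map_at (f : V -> V) (c d : V) : extend_map f c d c = d.
Proof.
  unfold extend_map; destruct (excluded_middle_informative (c = c)); congruence.
Qed.

Lemma extend_map_off (f : V -> V) (c d x : V) :
  x <> c -> extend_map f c d x = f x.
Proof.
  intro Hx; unfold extend_map; destruct (excluded_middle_informative (x = c)); congruence.
Qed.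

Lemma extend_map_off_list (l : list V) (f : V -> V) (c d x : V) :
  ~ In c l -> In x l -> extend_map f c d x = f x.
Proof. intros Hc Hx; apply extend_map_off; intros ->; contradiction. Qed.

Lemma extend_map_injective (l : list V) (f : V -> V) (c d : V) :
  ~ In c l -> (forall x, In x l -> f x <> d) ->
  (forall x y, In x l -> In y l -> f x = f y -> x = y) ->
  forall x y, In x (c :: l) -> In y (c :: l) ->
    extend_map f c d x = extend_map f c d y -> x = y.
Proof.
  intros Hc Hd Hinj x y [<- | Hx] [<- | Hy] Hxy; auto.
  - rewrite extend_map_at, (extend_map_off_list _ _ _ _ _ Hc Hy) in Hxy.
    exfalso; exact (Hd y Hy (eq_sym Hxy)).
  - rewrite extend_map_at, (extend_map_off_list _ _ _ _ _ Hc Hx) in Hxy.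
    exfalso; exact (Hd x Hx Hxy).
  - rewrite !(extend_map_off_list _ _ _ _ _ Hc) in Hxy by assumption; auto.
Qed.

Lemma stage_add_pair (s : stage) (c d : V) :
  ~ In c (stage_dom s) ->
  (forall x, In x (stage_dom s) -> stage_map s x <> d) ->
  (forall x y, In x (c :: stage_dom s) -> In y (c :: stage_dom s) -> E x y ->
     E (extend_map (stage_map s) c d x) (extend_map (stage_map s) c d y)) ->
  exists s', extends s s' /\ In c (stage_dom s') /\ stage_map s' c = d.
Proof.
  intros Hc Hd Hedge.
  pose proof (stage_mono s) as [Hinj _].
  exists (Stage (c :: stage_dom s) (extend_map (stage_map s) c d)
            (conj (extend_map_injective _ _ _ _ Hc Hd Hinj) Hedge)).
  split; [| split; [left; reflexivity | apply extend_map_at]].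
  intros x Hx; split; [right; exact Hx | apply (extend_map_off_list _ _ _ _ _ Hc Hx)].
Qed.

Lemma finite_list (l : list V) : finite_set (fun x => In x l).
Proof. exists l; tauto. Qed.

Lemma finite_image (l : list V) (f : V -> V) :
  finite_set (fun y => exists x, In x l /\ f x = y).
Proof. exists (map f l); intro y; rewrite in_map_iff; firstorder. Qed.

Lemma stage_is_mono (s : stage) :
  is_mono E (fun x => In x (stage_dom s))
    (fun y => exists x, In x (stage_dom s) /\ stage_map s x = y) (stage_map s).
Proof.
  destruct (stage_mono s) as [Hinj Hedge].
  split; [split|]; eauto.
Qed.

Lemma local_mono_of_mono (A B : V -> Prop) (f : V -> V) (l : list V) :
  (forall x, A x <-> In x l) -> is_mono E A B f -> local_mono l f.
Proof.
  intros HA [[_ Hedge] Hinj].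
  split; intros x y Hx Hy; [apply Hinj | apply Hedge]; apply HA; assumption.
Qed.

Lemma stage_extend_dom (s : stage) (c : V) :
  property_star E -> exists s', extends s s' /\ In c (stage_dom s').
Proof.
  intro Hstar.
  destruct (classic (In c (stage_dom s))) as [Hc | Hc].
  { exists s; split; [apply extends_refl | exact Hc]. }
  destruct (Hstar _ _ _ (finite_list _) (finite_image _ _) (stage_is_mono s)
              ltac:(auto) c Hc) as [d [Hd [_ Hedge]]].
  destruct (stage_add_pair s c d Hc) as [s' [Hss' [Hcs' _]]].
  - intros x Hx Hfx; apply Hd; exists x; auto.
  - intros x y [<- | Hx] [<- | Hy]; apply Hedge; unfold add_vertex; auto.
  - exists s'; auto.
Qed.

Lemma stage_extend_range (s : stage) (v : V) :
  HE_homogeneous E ->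
  exists s', extends s s' /\ exists x, In x (stage_dom s') /\ stage_map s' x = v.
Proof.
  intro HE.
  destruct (classic (exists x, In x (stage_dom s) /\ stage_map s x = v)) as [Hv | Hv].
  { exists s; split; [apply extends_refl | exact Hv]. }
  destruct (HE _ _ _ (finite_list _) (finite_image _ _) (proj1 (stage_is_mono s)))
    as [g [[_ Hg] [Hgsurj Hgf]]].
  destruct (Hgsurj v) as [c Hc].
  assert (Hcdom : ~ In c (stage_dom s))
    by (intro Hin; apply Hv; exists c; rewrite <- (Hgf c Hin); auto).
  assert (Hext_g : forall x, In x (c :: stage_dom s) ->
            extend_map (stage_map s) c v x = g x).
  { intros x [<- | Hx]; [rewrite extend_map_at; auto |].
    rewrite (extend_map_off_list _ _ _ _ _ Hcdom Hx); symmetry; auto. }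
  destruct (stage_add_pair s c v Hcdom) as [s' [Hss' [Hcs' Hs'c]]].
  - intros x Hx Hfx; apply Hv; exists x; auto.
  - intros x y Hx Hy Exy; rewrite (Hext_g x Hx), (Hext_g y Hy).
    apply Hg; [exact I | exact I | exact Exy].
  - exists s'; eauto.
Qed.

Lemma stage_extend_cover (s : stage) (v : V) :
  property_star E -> HE_homogeneous E -> exists s', extends s s' /\ covers s' v.
Proof.
  intros Hstar HE.
  destruct (stage_extend_dom s v Hstar) as [s1 [H01 Hv1]].
  destruct (stage_extend_range s1 v HE) as [s2 [H12 Hv2]].
  exists s2; split; [exact (extends_trans _ _ _ H01 H12) |].
  split; [apply (H12 v Hv1) | exact Hv2].
Qed.

Lemma covering_chain (s0 : stage) (enum : nat -> V) :
  property_star E -> HE_homogeneous E ->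
  exists st : nat -> stage, st 0 = s0 /\
    (forall n, extends (st n) (st (S n))) /\ (forall n, covers (st (S n)) (enum n)).
Proof.
  intros Hstar HE.
  pose (next s v := proj1_sig (constructive_indefinite_description _
                      (stage_extend_cover s v Hstar HE))).
  pose (st := nat_rect (fun _ => stage) s0 (fun n s => next s (enum n))).
  assert (Hnext : forall n, extends (st n) (st (S n)) /\ covers (st (S n)) (enum n))
    by (intro n; exact (proj2_sig (constructive_indefinite_description _
                          (stage_extend_cover (st n) (enum n) Hstar HE)))).
  exists st; split; [reflexivity | split; intro n; apply Hnext].
Qed.

Section Limit.

Variables (st : nat -> stage) (N : V -> nat).
Hypothesis st_extends : forall n, extends (st n) (st (S n)).
Hypothesis st_covers : forall v, covers (st (N v)) v.

Definition limit_map (x : V) : V := stage_map (st (N x)) x.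

Lemma chain_extends (n m : nat) : n <= m -> extends (st n) (st m).
Proof.
  induction 1; [apply extends_refl | exact (extends_trans _ _ _ IHle (st_extends m))].
Qed.

Lemma limit_map_at_stage (x : V) (n : nat) :
  N x <= n -> In x (stage_dom (st n)) /\ stage_map (st n) x = limit_map x.
Proof. intro Hn; exact (chain_extends _ _ Hn x (proj1 (st_covers x))). Qed.

Lemma limit_map_eq (x : V) (n : nat) :
  In x (stage_dom (st n)) -> limit_map x = stage_map (st n) x.
Proof.
  intro Hx.
  destruct (limit_map_at_stage x (Nat.max n (N x))) as [_ <-]; [lia |].
  exact (proj2 (chain_extends _ _ (Nat.le_max_l n (N x)) x Hx)).
Qed.

Lemma limit_map_restricts :
  restricts_to limit_map (stage_map (st 0)) (fun x => In x (stage_dom (st 0))).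
Proof.
  intros x Hx; exact (limit_map_eq x 0 Hx).
Qed.

Lemma limit_map_pair (x y : V) :
  exists n, In x (stage_dom (st n)) /\ In y (stage_dom (st n)) /\
    stage_map (st n) x = limit_map x /\ stage_map (st n) y = limit_map y.
Proof.
  exists (Nat.max (N x) (N y)).
  destruct (limit_map_at_stage x (Nat.max (N x) (N y))) as [Hx Ex]; [lia |].
  destruct (limit_map_at_stage y (Nat.max (N x) (N y))) as [Hy Ey]; [lia |].
  auto.
Qed.

Lemma limit_map_bimorphism :
  is_hom E full full limit_map /\ inj limit_map /\ surj limit_map.
Proof.
  split; [split; [intros; exact I |] | split].
  - intros x y _ _ Exy.
    destruct (limit_map_pair x y) as [n [Hx [Hy [<- <-]]]].
    exact (proj2 (stage_mono (st n)) x y Hx Hy Exy).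
  - intros x y Hxy.
    destruct (limit_map_pair x y) as [n [Hx [Hy [Ex Ey]]]].
    apply (proj1 (stage_mono (st n))); congruence.
  - intro v. destruct (proj2 (st_covers v)) as [x [Hx <-]].
    exists x; exact (limit_map_eq x (N v) Hx).
Qed.

End Limit.

End BackAndForth.

Lemma countable_enumeration (V : Type) :
  countably_infinite V -> exists (enum : nat -> V) (idx : V -> nat), forall v, enum (idx v) = v.
Proof.
  intros [h [hinj hsurj]].
  exists (fun n => proj1_sig (constructive_indefinite_description _ (hsurj n))), h.
  intro v; apply hinj.
  exact (proj2_sig (constructive_indefinite_description _ (hsurj (h v)))).
Qed.

Theorem proposition4p6 (V : Type) (E : V -> V -> Prop) :
  simple_graph E -> countably_infinite V ->
  HE_homogeneous E -> property_star E -> MB_homogeneous E.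
Proof.
  intros _ Hcount HE Hstar A B f [lA HlA] _ Hf.
  pose (s0 := Stage V E lA f (local_mono_of_mono V E A B f lA HlA Hf)).
  destruct (countable_enumeration V Hcount) as [enum [idx Henum]].
  destruct (covering_chain V E s0 enum Hstar HE) as [st [Hst0 [Hext Hcov]]].
  assert (Hcov_idx : forall v, covers V E (st (S (idx v))) v)
    by (intro v; rewrite <- (Henum v) at 2; apply Hcov).
  exists (limit_map V E st (fun v => S (idx v))).
  destruct (limit_map_bimorphism V E st _ Hext Hcov_idx) as [Hhom [Hinj Hsurj]].
  split; [exact Hhom | split; [exact Hinj | split; [exact Hsurj |]]].
  intros x Hx.
  assert (Hx0 : In x (stage_dom V E (st 0))) by (rewrite Hst0; apply HlA, Hx).
  rewrite (limit_map_restricts V E st _ Hext Hcov_idx x Hx0), Hst0; reflexivity.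
Qed.
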